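(* Let $\mathbf{X}\subseteq\mathbb{R}_+^n$ be an interval and $\mathrm{IC}(\mathbf{a}_0,\dots,\mathbf{a}_{n-1})$ an interval circulant matrix. (a) $\mathbf{X}$ is possibly $\mathrm{IC}$-robust, i.e. there exists $x\in\mathbf{X}$ with $x\in\mathrm{Attr}(A)$ for all $A\in\mathrm{IC}(\mathbf{a}_0,\dots,\mathbf{a}_{n-1})$, if and only if there exists $x\in\mathbf{X}$ satisfying $\lambda(A^{(i)})(A^{(i)})^{n^2}\otimes x=(A^{(i)})^{n^2+1}\otimes x$ for all $i\in\{0,\dots,n-1\}$ with $A^{(i)}\ne0$. (b) If moreover $\hat A\in\mathrm{IC}(\mathbf{a}_0,\dots,\mathbf{a}_{n-1})$, then $\mathbf{X}$ is tolerance $\mathrm{IC}$-robust (for every $x\in\mathbf{X}$ there exists $A\in\mathrm{IC}(\mathbf{a}_0,\dots,\mathbf{a}_{n-1})$ with $x\in\mathrm{Attr}(A)$) if and only if $\mathrm{IC}(\mathbf{a}_0,\dots,\mathbf{a}_{n-1})$ is possibly $\mathbf{X}$-robust (there exists $A\in\mathrm{IC}(\mathbf{a}_0,\dots,\mathbf{a}_{n-1})$ with $x\in\mathrm{Attr}(A)$ for all $x\in\mathbf{X}$).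
   Context: Max algebra on $\mathbb{R}_+$: $\oplus=\max$, ordinary product, $A^t$ max-algebraic power; $\lambda(A)$ greatest max-algebraic eigenvalue (maximum cycle geometric mean); $\mathrm{Attr}(A)=\{x\in\mathbb{R}_+^n: A^{t+1}\otimes x=\lambda(A)A^t\otimes x\text{ for some }t\ge0\}$. An interval $\mathbf{X}=\prod_i\mathbf{X}_i$ has each $\mathbf{X}_i\subseteq\mathbb{R}_+$ nonempty of one of the forms $[\underline{x}_i,\overline{x}_i]$, $(\underline{x}_i,\overline{x}_i)$, $(\underline{x}_i,\overline{x}_i]$, $[\underline{x}_i,\overline{x}_i)$. $\mathrm{Circ}(a_0,\dots,a_{n-1})$ has entries $A_{i,j}=a_t$, $t\equiv j-i\pmod n$; $\mathrm{IC}(\mathbf{a}_0,\dots,\mathbf{a}_{n-1})$ is the set of all $\mathrm{Circ}(a_0,\dots,a_{n-1})$ with $a_t\in\mathbf{a}_t$, each $\mathbf{a}_t\subseteq\mathbb{R}_+$ a nonempty interval of one of the four forms with endpoints $\underline a_t\le\overline a_t$. $A^{(k)}=\mathrm{Circ}(\underline{a}_0,\dots,\underline{a}_{k-1},\overline{a}_k,\underline{a}_{k+1},\dots,\underline{a}_{n-1})$; $\underline a=\max_k\underline a_k$, $\hat A=\mathrm{Circ}(\hat a_0,\dots,\hat a_{n-1})$, $\hat a_i=\min\{\underline a,\overline a_i\}$. *)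

From Stdlib Require Import Reals.
From mathcomp Require Import all_boot.
Set Implicit Arguments. Unset Strict Implicit. Unset Printing Implicit Defensive.

(* An interval with endpoints lo <= hi; cl/cr say whether the left/right
   endpoint is included: [lo,hi], (lo,hi), (lo,hi], [lo,hi). *)
Record itv := Itv { lo : R; hi : R; cl : bool; cr : bool }.

Definition in_itv (I : itv) (x : R) : Prop :=
  (if cl I then Rle (lo I) x else Rlt (lo I) x) /\
  (if cr I then Rle x (hi I) else Rlt x (hi I)).

Definition valid_itv (I : itv) : Prop :=
  Rle R0 (lo I) /\ exists x, in_itv I x.

Definition mat (n : nat) := 'I_n -> 'I_n -> R.
Definition vec (n : nat) := 'I_n -> R.

Definition mxmul n (A B : mat n) : mat n :=
  fun i j => \big[Rmax/R0]_(k < n) Rmult (A i k) (B k j).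

Definition mxvec n (A : mat n) (x : vec n) : vec n :=
  fun i => \big[Rmax/R0]_(k < n) Rmult (A i k) (x k).

Definition mxid n : mat n := fun i j => if i == j then R1 else R0.

Fixpoint mxpow n (A : mat n) (t : nat) : mat n :=
  match t with
  | 0 => @mxid n
  | t'.+1 => mxmul A (mxpow A t')
  end.

Definition rootn (k : nat) (w : R) : R :=
  if Rle_dec w R0 then R0 else Rpower w (Rinv (INR k)).

Definition cycle_weight n k (A : mat n) (s : (k.+1).-tuple 'I_n) : R :=
  \big[Rmult/R1]_(j < k.+1) A (tnth s j) (tnth s (ordS j)).

(* Closed walks of length <= n
   include all elementary cycles, and no closed walk has a larger
   geometric mean than the best elementary cycle, so this is exactly
   the maximum cycle geometric mean. *)
Definition mlambda n (A : mat n) : R :=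
  \big[Rmax/R0]_(k < n)
     \big[Rmax/R0]_(s : (k.+1).-tuple 'I_n) rootn k.+1 (cycle_weight A s).

Definition Attr n (A : mat n) (x : vec n) : Prop :=
  exists t : nat, forall i : 'I_n,
    mxvec (mxpow A t.+1) x i = Rmult (mlambda A) (mxvec (mxpow A t) x i).

Definition circ n (a : nat -> R) : mat n :=
  fun i j => a ((j + n - i) %% n).

Definition inIC n (ai : nat -> itv) (A : mat n) : Prop :=
  exists a : nat -> R,
    (forall t, t < n -> in_itv (ai t) (a t)) /\
    (forall i j, A i j = @circ n a i j).

Definition Ak n (ai : nat -> itv) (k : nat) : mat n :=
  @circ n (fun t => if t == k then hi (ai t) else lo (ai t)).

Definition ulo n (ai : nat -> itv) : R :=
  \big[Rmax/R0]_(k < n) lo (ai k).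

Definition Ahat n (ai : nat -> itv) : mat n :=
  @circ n (fun t => Rmin (ulo n ai) (hi (ai t))).

Definition mx_nonzero n (A : mat n) : Prop := exists i j, A i j <> R0.

Definition in_box n (X : 'I_n -> itv) (x : vec n) : Prop :=
  forall i, in_itv (X i) (x i).

From HB Require Import structures.
From Stdlib Require Import Reals Lra FunctionalExtensionality.
From mathcomp Require Import all_boot zify.
Set Implicit Arguments. Unset Strict Implicit. Unset Printing Implicit Defensive.

(* For a circulant matrix A with nonnegative coefficients a_0, ..., a_(N-1), lambda(A) is
   the largest a_t, and (A^k x)_c is the maximum, over walks of k steps, of the product of
   the coefficients a_t of the steps times x at the endpoint, a step t moving by t mod N.
   A walk longer than N(N-1) repeats some step N times, and these N steps together return
   to their start; hence A^L x = lambda^N A^(L-N) x for L > N(N-1), and x is in Attr(A)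
   iff A^(N^2+1) x = lambda A^(N^2) x.
   Normalize lambda to 1.  If b' <= b <= 1 entrywise and lambda(b') = 1, every x attracted
   by b' is attracted by b.  In (a), a member of the family whose largest coefficient is
   a_i dominates A^(i) in this normalized sense; conversely A^(i) is a limit of members of
   the family, and the condition at time N^2 is closed in the coefficients.  In (b), hat A
   dominates every member of the family. *)

HB.instance Definition _ := Monoid.isComLaw.Build R R1 Rmult
  (fun x y z => esym (Rmult_assoc x y z)) Rmult_comm Rmult_1_l.

Local Open Scope R_scope.

Lemma iter_Rmult_pow k x : iter k (Rmult x) 1 = x ^ k.
Proof. by elim: k => //= k ->. Qed.

Lemma Rabs_le_inv u b : Rabs u <= b -> - b <= u <= b.
Proof. by move=> h; have := Rle_abs u; have := Rle_abs (- u); rewrite Rabs_Ropp; lra. Qed.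

Section BigRmax.
Variable I : finType.
Implicit Types F G : I -> R.

Lemma bigRmax_ge0 F : 0 <= \big[Rmax/R0]_i F i.
Proof.
elim: (index_enum I) => [|j r IH]; first by rewrite big_nil; lra.
by rewrite big_cons; apply: Rle_trans IH (Rmax_r _ _).
Qed.

Lemma bigRmax_ub F i : F i <= \big[Rmax/R0]_j F j.
Proof.
have : i \in index_enum I by rewrite mem_index_enum.
elim: (index_enum I) => [|j r IH] //; rewrite inE big_cons => /orP [/eqP <-|/IH ir].
  exact: Rmax_l.
exact: Rle_trans ir (Rmax_r _ _).
Qed.

Lemma bigRmax_lub F c : 0 <= c -> (forall i, F i <= c) -> \big[Rmax/R0]_i F i <= c.
Proof. by move=> c0 h; apply: (big_ind (fun v => v <= c)) => // u v; apply: Rmax_lub. Qed.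

Lemma bigRmax_le F G : (forall i, F i <= G i) -> \big[Rmax/R0]_i F i <= \big[Rmax/R0]_i G i.
Proof.
move=> h; apply: bigRmax_lub => [|i]; first exact: bigRmax_ge0.
exact: Rle_trans (h i) (bigRmax_ub G i).
Qed.

Lemma bigRmax_attained F : \big[Rmax/R0]_i F i = 0 \/ exists i, \big[Rmax/R0]_j F j = F i.
Proof.
apply: (big_ind (fun v => v = 0 \/ exists i, v = F i)) => [|u v hu hv|i _].
- by left.
- by rewrite /Rmax; case: Rle_dec.
- by right; exists i.
Qed.

Lemma bigRmax_mull r F : 0 <= r -> \big[Rmax/R0]_i (r * F i) = r * \big[Rmax/R0]_i F i.
Proof.
move=> hr; symmetry; apply: (big_morph (Rmult r)); last exact: Rmult_0_r.
by move=> u v; rewrite RmaxRmult.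
Qed.

Lemma bigRmax_mulr r F : 0 <= r -> \big[Rmax/R0]_i (F i * r) = \big[Rmax/R0]_i F i * r.
Proof.
move=> hr; rewrite Rmult_comm -bigRmax_mull //.
by apply: eq_bigr => i _; rewrite Rmult_comm.
Qed.
End BigRmax.

Lemma bigRmax_exchange (I J : finType) (F : I -> J -> R) :
  \big[Rmax/R0]_i \big[Rmax/R0]_j F i j = \big[Rmax/R0]_j \big[Rmax/R0]_i F i j.
Proof.
apply: Rle_antisym; apply: bigRmax_lub => [|k]; try exact: bigRmax_ge0;
  apply: bigRmax_lub => [|l]; try exact: bigRmax_ge0.
- exact: Rle_trans (bigRmax_ub (F ^~ l) k) (bigRmax_ub _ l).
- exact: Rle_trans (bigRmax_ub (F l) k) (bigRmax_ub _ l).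
Qed.

Section MaxTimes.
Variable n : nat.
Implicit Types (A B : mat n) (x : vec n).

Definition nonneg_mx A := forall i j, 0 <= A i j.
Definition nonneg_vec x := forall i, 0 <= x i.

Lemma mxvec_id x : nonneg_vec x -> mxvec (@mxid n) x = x.
Proof.
move=> hx; apply: functional_extensionality => i; apply: Rle_antisym.
  apply: bigRmax_lub => [|k]; first exact: hx.
  rewrite /mxid; case: eqP => [->|_].
    by rewrite Rmult_1_l; apply: Rle_refl.
  by rewrite Rmult_0_l; apply: hx.
by have := bigRmax_ub (fun k => mxid i k * x k) i; rewrite /mxid eqxx Rmult_1_l.
Qed.

Lemma mxvec_mul A B x : nonneg_mx A -> nonneg_vec x ->
  mxvec (mxmul A B) x = mxvec A (mxvec B x).
Proof.
move=> hA hx; apply: functional_extensionality => i; rewrite /mxvec /mxmul.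
under eq_bigr => j _ do rewrite -bigRmax_mulr //.
rewrite bigRmax_exchange; apply: eq_bigr => k _.
rewrite -bigRmax_mull //; apply: eq_bigr => j _; exact: Rmult_assoc.
Qed.

Lemma mxvec_mxpow A t x : nonneg_mx A -> nonneg_vec x ->
  mxvec (mxpow A t) x = iter t (mxvec A) x.
Proof. by move=> hA hx; elim: t => [|t /= <-]; [exact: mxvec_id | exact: mxvec_mul]. Qed.
End MaxTimes.

Section Circulant.
Variable n : nat.
Local Notation N := n.+1.
Implicit Types (a b : nat -> R) (x y : vec N).

Definition ordmod (m : nat) : 'I_N := inord (m %% N).

Lemma ordmodE m : ordmod m = m %% N :> nat.
Proof. by rewrite /ordmod inordK // ltn_pmod. Qed.

Lemma ordmod_ord (c : 'I_N) : ordmod c = c.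
Proof. by apply: ord_inj; rewrite ordmodE modn_small. Qed.

Lemma ordmod_modl m k : ordmod (m %% N + k) = ordmod (m + k).
Proof. by rewrite /ordmod modnDml. Qed.

Lemma circ_step a (c s : 'I_N) : circ a c (ordmod (c + s)) = a s.
Proof.
have cN := ltn_ord c; rewrite /circ ordmodE -addnBA ?modnDml; last lia.
have -> : (c + s + (N - c) = s + N)%N by lia.
by rewrite modnDr modn_small.
Qed.

Lemma ordmod_step (c k : 'I_N) : ordmod (c + ordmod (k + N - c)) = k.
Proof.
have cN := ltn_ord c; apply: ord_inj; rewrite !ordmodE modnDmr -addnBA; last lia.
have -> : (c + (k + (N - c)) = k + N)%N by lia.
by rewrite modnDr modn_small.
Qed.

Definition nonneg_coef a := forall t, (t < N)%N -> 0 <= a t.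

Lemma circ_ge0 a : nonneg_coef a -> nonneg_mx (circ a : mat N).
Proof. by move=> ha i j; apply: ha; rewrite ltn_pmod. Qed.

Definition cvec a y : vec N := mxvec (circ a) y.

Lemma cvec_ge0 a y c : 0 <= cvec a y c.
Proof. exact: bigRmax_ge0. Qed.

Lemma cvec_le_vec a y z c : nonneg_coef a -> (forall d, y d <= z d) ->
  cvec a y c <= cvec a z c.
Proof. by move=> ha h; apply: bigRmax_le => k; apply: Rmult_le_compat_l; [exact: circ_ge0 |]. Qed.

Lemma cvec_le_coef a b y c : (forall t, (t < N)%N -> a t <= b t) -> nonneg_vec y ->
  cvec a y c <= cvec b y c.
Proof.
by move=> h hy; apply: bigRmax_le => k; apply: Rmult_le_compat_r => //; apply/h/ltn_pmod.
Qed.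

Lemma cvec_scalev a y r c : 0 <= r -> cvec a (fun d => r * y d) c = r * cvec a y c.
Proof.
move=> hr; rewrite /cvec /mxvec -bigRmax_mull //.
by apply: eq_bigr => k _; rewrite Rmult_comm Rmult_assoc (Rmult_comm (y k)).
Qed.

Lemma cvec_scalec a y r c : 0 <= r -> cvec (fun t => r * a t) y c = r * cvec a y c.
Proof.
move=> hr; rewrite /cvec /mxvec -bigRmax_mull //.
by apply: eq_bigr => k _; rewrite /circ Rmult_assoc.
Qed.

Lemma iter_cvec_ge0 a k y c : nonneg_vec y -> 0 <= iter k (cvec a) y c.
Proof. by case: k => [|k] hy //=; apply: cvec_ge0. Qed.

Lemma iter_cvec_le_vec a k y z : nonneg_coef a -> (forall c, y c <= z c) ->
  forall c, iter k (cvec a) y c <= iter k (cvec a) z c.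
Proof. by move=> ha h; elim: k => [|k IH] c //=; apply: cvec_le_vec. Qed.

Lemma iter_cvec_le_coef a b k y : (forall t, (t < N)%N -> a t <= b t) -> nonneg_coef a ->
  nonneg_vec y -> forall c, iter k (cvec a) y c <= iter k (cvec b) y c.
Proof.
move=> hab ha hy; elim: k => [|k IH] c /=; first exact: Rle_refl.
apply: Rle_trans (cvec_le_vec _ ha IH) _.
by apply: cvec_le_coef => // d; apply: iter_cvec_ge0.
Qed.

Lemma iter_cvec_scalec a k y r : 0 <= r ->
  iter k (cvec (fun t => r * a t)) y = fun d => r ^ k * iter k (cvec a) y d.
Proof.
move=> hr; elim: k => [|k IH] /=.
  by apply: functional_extensionality => d; rewrite Rmult_1_l.
rewrite IH; apply: functional_extensionality => d.
rewrite cvec_scalev; last exact: pow_le.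
by rewrite cvec_scalec //=; ring.
Qed.

Definition cmax a := \big[Rmax/R0]_(t < N) a t.

Lemma cmax_ge0 a : 0 <= cmax a.
Proof. exact: bigRmax_ge0. Qed.

Lemma cmax_ub a t : (t < N)%N -> a t <= cmax a.
Proof. by move=> ht; apply: (bigRmax_ub (fun t : 'I_N => a t) (Ordinal ht)). Qed.

Lemma cmax_lub a c : 0 <= c -> (forall t, (t < N)%N -> a t <= c) -> cmax a <= c.
Proof. by move=> c0 h; apply: bigRmax_lub => // t; apply: h. Qed.

Lemma cmax_attained a : nonneg_coef a -> exists2 i, (i < N)%N & a i = cmax a.
Proof.
move=> ha; case: (bigRmax_attained (fun t : 'I_N => a t)) => [h|[k hk]].
  exists 0%N => //; apply: Rle_antisym; first exact: cmax_ub.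
  by rewrite /cmax h; apply: ha.
by exists k => //; rewrite /cmax hk.
Qed.

Lemma cmax_eq0 a : nonneg_coef a -> cmax a = 0 -> forall t, (t < N)%N -> a t = 0.
Proof. by move=> ha h0 t ht; apply: Rle_antisym; [rewrite -h0; apply: cmax_ub | apply: ha]. Qed.

Lemma cmax_scale a r : nonneg_coef a -> 0 <= r -> cmax (fun t => r * a t) = r * cmax a.
Proof. by move=> ha hr; rewrite /cmax bigRmax_mull. Qed.

Lemma cvec_cmax0 a y c : nonneg_coef a -> cmax a = 0 -> cvec a y c = 0.
Proof.
move=> ha h0; apply: Rle_antisym; last exact: cvec_ge0.
apply: bigRmax_lub => [|k]; first exact: Rle_refl.
by rewrite /circ (cmax_eq0 ha h0) ?ltn_pmod // Rmult_0_l; apply: Rle_refl.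
Qed.

Lemma cycle_weight_le a k (s : (k.+1).-tuple 'I_N) : nonneg_coef a ->
  0 <= cycle_weight (circ a) s <= cmax a ^ k.+1.
Proof.
move=> ha; rewrite /cycle_weight -iter_Rmult_pow -big_const_ord.
apply: (big_ind2 (fun u v => 0 <= u <= v)) => [|u1 u2 v1 v2 h1 h2|j _].
- lra.
- by split; [apply: Rmult_le_pos | apply: Rmult_le_compat]; lra.
- by split; [apply: circ_ge0 | apply/cmax_ub/ltn_pmod].
Qed.

Lemma cycle_weight_step a t : (t < N)%N ->
  cycle_weight (circ a) [tuple ordmod (j * t) | j < N] = a t ^ N.
Proof.
move=> ht; rewrite /cycle_weight -iter_Rmult_pow -big_const_ord.
apply: eq_bigr => j _; rewrite !tnth_mktuple.
have -> : ordmod (ordS j * t) = ordmod (ordmod (j * t) + Ordinal ht).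
  by apply: ord_inj; rewrite !ordmodE /= modnMml mulSn modnDml addnC.
by rewrite circ_step.
Qed.

Lemma rootnE k w : 0 < w -> rootn k w = Rpower w (/ INR k).
Proof. by rewrite /rootn; case: Rle_dec => // h /Rlt_not_le. Qed.

Lemma rootn_pow k l : 0 < l -> rootn k.+1 (l ^ k.+1) = l.
Proof.
move=> hl; rewrite rootnE; last exact: pow_lt.
by rewrite -(Rpower_pow k.+1 _ hl) Rpower_mult Rinv_r ?Rpower_1 //; apply: not_0_INR.
Qed.

Lemma rootn_le k w l : 0 <= l -> w <= l ^ k.+1 -> rootn k.+1 w <= l.
Proof.
move=> hl hw; case: (Rle_lt_dec w 0) => w0.
  by rewrite /rootn; case: Rle_dec => // /(_ w0).
have l0 : 0 < l by case: (Rle_lt_or_eq_dec _ _ hl) => // l0; rewrite -l0 pow_i in hw; [lra | lia].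
rewrite rootnE // -(rootn_pow k l0) rootnE; last exact: pow_lt.
apply: Rle_Rpower_l => //; apply/Rlt_le/Rinv_0_lt_compat/lt_0_INR; lia.
Qed.

Lemma mlambda_circ a : nonneg_coef a -> mlambda (circ a : mat N) = cmax a.
Proof.
move=> ha; apply: Rle_antisym.
  apply: bigRmax_lub => [|k]; first exact: cmax_ge0.
  apply: bigRmax_lub => [|s]; first exact: cmax_ge0.
  by apply: rootn_le; [exact: cmax_ge0 | case: (cycle_weight_le s ha)].
have [t ht <-] := cmax_attained ha.
case: (Rle_lt_or_eq_dec _ _ (ha t ht)) => [at0|<-]; last exact: bigRmax_ge0.
apply: Rle_trans (bigRmax_ub _ ord_max); rewrite -(rootn_pow n at0) -cycle_weight_step //.
exact: (bigRmax_ub (fun s : N.-tuple 'I_N => rootn N (cycle_weight (circ a) s))).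
Qed.

Lemma circ_nonzero a : nonneg_coef a -> 0 < cmax a -> mx_nonzero (circ a : mat N).
Proof.
move=> ha hl; have [t ht et] := cmax_attained ha.
by exists ord0, (ordmod (@ord0 n + Ordinal ht)); rewrite circ_step /= et; lra.
Qed.
End Circulant.

Lemma size_count_mem (T : finType) (w : seq T) : size w = (\sum_(s : T) count_mem s w)%N.
Proof.
elim: w => [|y w IH] /=; first by rewrite big1.
rewrite big_split /= -IH (bigD1 y) //= eqxx big1 // => s.
by rewrite eq_sym => /negbTE ->.
Qed.

Lemma perm_nseq_of_count (T : eqType) (s : T) k (w : seq T) :
  (k <= count_mem s w)%N -> exists w', perm_eq w (nseq k s ++ w').
Proof.
elim: k w => [|k IH] w hk; first by exists w.
have sw : s \in w by rewrite -has_pred1 has_count; lia.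
have /IH [w' hw'] : (k <= count_mem s (rem s w))%N by rewrite count_mem_rem eqxx; lia.
by exists w'; apply: perm_trans (perm_to_rem sw) _; rewrite /= perm_cons.
Qed.

Section Walks.
Variable n : nat.
Local Notation N := n.+1.
Implicit Types (a : nat -> R) (x y : vec N) (w : seq 'I_N).

Lemma count_mem_pigeonhole w : (N * n < size w)%N -> exists s : 'I_N, (N <= count_mem s w)%N.
Proof.
move=> hw; case: (boolP [exists s : 'I_N, N <= count_mem s w]%N) => [/existsP //|/existsPn hs].
have : (size w <= \sum_(s < N) n)%N.
  by rewrite size_count_mem; apply: leq_sum => s _; have := hs s; rewrite -ltnNge ltnS.
by rewrite sum_nat_const card_ord leqNgt hw.
Qed.

Definition walk_end (c : 'I_N) w : 'I_N := ordmod n (c + \sum_(s <- w) s).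
Definition walk_value a x c w := \big[Rmult/R1]_(s <- w) a s * x (walk_end c w).

Lemma walk_value_nil a x c : walk_value a x c [::] = x c.
Proof. by rewrite /walk_value /walk_end !big_nil addn0 ordmod_ord Rmult_1_l. Qed.

Lemma walk_value_cons a x c s w :
  walk_value a x c (s :: w) = a s * walk_value a x (ordmod n (c + s)) w.
Proof. by rewrite /walk_value /walk_end !big_cons Rmult_assoc ordmodE ordmod_modl addnA. Qed.

Lemma walk_value_perm a x c w1 w2 : perm_eq w1 w2 -> walk_value a x c w1 = walk_value a x c w2.
Proof. by move=> h; rewrite /walk_value /walk_end (perm_big _ h) (perm_big _ h). Qed.

Lemma walk_value_nseq a x c (s : 'I_N) w :
  walk_value a x c (nseq N s ++ w) = a s ^ N * walk_value a x c w.
Proof.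
rewrite /walk_value /walk_end !big_cat !big_nseq iter_Rmult_pow iter_addn_0 Rmult_assoc.
by rewrite addnCA /ordmod modnMDl.
Qed.

Lemma walk_value_ge0 a x c w : nonneg_coef n a -> nonneg_vec x -> 0 <= walk_value a x c w.
Proof.
move=> ha hx; apply: Rmult_le_pos (hx _).
by apply: (big_ind (fun v => 0 <= v)) => [|u v|s _]; [lra | apply: Rmult_le_pos | apply/ha/ltn_ord].
Qed.

Lemma walk_value_le_iter a x w c : nonneg_coef n a ->
  walk_value a x c w <= iter (size w) (cvec a) x c.
Proof.
move=> ha; elim: w c => [|s w IH] c; first by rewrite walk_value_nil; apply: Rle_refl.
rewrite walk_value_cons -(circ_step a c s) /=.
apply: Rle_trans (Rmult_le_compat_l _ _ _ (circ_ge0 ha _ _) (IH _)) _.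
exact: (bigRmax_ub (fun k => circ a c k * iter (size w) (cvec a) x k)).
Qed.

(* Generalized with a weight [r] so that the induction needs no division. *)
Lemma iter_le_walks a x L c B : nonneg_coef n a -> 0 <= B ->
  (forall w, size w = L -> walk_value a x c w <= B) -> iter L (cvec a) x c <= B.
Proof.
move=> ha hB; suff gen : forall L c r, 0 <= r ->
    (forall w, size w = L -> r * walk_value a x c w <= B) -> r * iter L (cvec a) x c <= B.
  move=> h; rewrite -[iter _ _ _ _]Rmult_1_l; apply: gen => [|w /h]; [lra | by rewrite Rmult_1_l].
elim=> [|{}L IH] {}c r hr h; first by have := h [::] erefl; rewrite walk_value_nil.
rewrite /= /cvec /mxvec -bigRmax_mull //; apply: bigRmax_lub => // k.
have ek := ordmod_step c k; set s := ordmod n (k + N - c) in ek *.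
rewrite -{1}ek circ_step -Rmult_assoc; apply: IH => [|w sw].
  by apply: Rmult_le_pos => //; apply/ha/ltn_ord.
by have := h (s :: w); rewrite /= sw walk_value_cons ek Rmult_assoc => /(_ erefl).
Qed.

Lemma iter_le_cmax_pow a x L c : nonneg_coef n a -> nonneg_vec x -> (N * n < L)%N ->
  iter L (cvec a) x c <= cmax n a ^ N * iter (L - N) (cvec a) x c.
Proof.
move=> ha hx hL; apply: iter_le_walks => // [|w sw].
  by apply: Rmult_le_pos; [apply/pow_le/cmax_ge0 | apply: iter_cvec_ge0].
have [s hs] : exists s : 'I_N, (N <= count_mem s w)%N by apply: count_mem_pigeonhole; rewrite sw.
have [w' hw'] := perm_nseq_of_count hs.
have sw' : size w' = (L - N)%N.
  by have := perm_size hw'; rewrite size_cat size_nseq sw => ->; rewrite addKn.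
rewrite (walk_value_perm _ _ _ hw') walk_value_nseq -sw'.
apply: Rmult_le_compat; [apply/pow_le/ha/ltn_ord | exact: walk_value_ge0 | |].
  by apply: pow_incr; split; [apply/ha/ltn_ord | apply/cmax_ub/ltn_ord].
exact: walk_value_le_iter.
Qed.

Lemma cmax_pow_le_iter a y c : nonneg_coef n a -> cmax n a ^ N * y c <= iter N (cvec a) y c.
Proof.
move=> ha; have [t ht <-] := cmax_attained ha.
have := walk_value_le_iter y (nseq N (Ordinal ht) ++ [::]) c ha.
by rewrite walk_value_nseq walk_value_nil size_cat size_nseq addn0.
Qed.

Lemma iter_cvec_periodic a x L : nonneg_coef n a -> nonneg_vec x -> (N * n < L)%N ->
  iter L (cvec a) x = fun c => cmax n a ^ N * iter (L - N) (cvec a) x c.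
Proof.
move=> ha hx hL; apply: functional_extensionality => c; apply: Rle_antisym.
  exact: iter_le_cmax_pow.
have -> : iter L (cvec a) x = iter N (cvec a) (iter (L - N) (cvec a) x).
  by rewrite -iterD subnKC //; nia.
exact: cmax_pow_le_iter.
Qed.

Lemma iter_cvec_periodic_pow a x r j : nonneg_coef n a -> nonneg_vec x ->
  iter (N * N + r + j * N) (cvec a) x = fun c => cmax n a ^ (j * N) * iter (N * N + r) (cvec a) x c.
Proof.
move=> ha hx; elim: j => [|j IH].
  by apply: functional_extensionality => c; rewrite mul0n addn0 Rmult_1_l.
rewrite iter_cvec_periodic //; last by nia.
have -> : (N * N + r + j.+1 * N - N = N * N + r + j * N)%N by nia.
by rewrite IH; apply: functional_extensionality => c; rewrite mulSn pow_add Rmult_assoc.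
Qed.
End Walks.

Lemma Rinv_mul_le_cross p q u v : 0 < p -> 0 < q -> u * q <= v * p -> / p * u <= / q * v.
Proof.
move=> hp hq h.
have -> : / p * u = (u * q) * / (p * q) by field; lra.
have -> : / q * v = (v * p) * / (p * q) by field; lra.
by apply: Rmult_le_compat_r => //; apply/Rlt_le/Rinv_0_lt_compat/Rmult_lt_0_compat.
Qed.

Section Stability.
Variable n : nat.
Local Notation N := n.+1.
Local Notation cmax := (cmax n).
Local Notation nonneg_coef := (nonneg_coef n).
Implicit Types (a b : nat -> R) (x y : vec N).

Definition stable a x t := forall c, iter t.+1 (cvec a) x c = cmax a * iter t (cvec a) x c.

Lemma stable_cmax0 a x t : nonneg_coef a -> cmax a = 0 -> stable a x t.
Proof. by move=> ha h0 c; rewrite /= cvec_cmax0 // h0 Rmult_0_l. Qed.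

Lemma stableD a x t d : nonneg_coef a -> stable a x t -> stable a x (t + d).
Proof.
move=> ha ht; elim: d => [|d IH] c; first by rewrite addn0.
rewrite addnS; change (cvec a (iter (t + d).+1 (cvec a) x) c
                      = cmax a * cvec a (iter (t + d) (cvec a) x) c).
have -> : iter (t + d).+1 (cvec a) x = fun c => cmax a * iter (t + d) (cvec a) x c.
  exact: functional_extensionality.
by rewrite cvec_scalev //; apply: cmax_ge0.
Qed.

Lemma stable_sq a x : nonneg_coef a -> nonneg_vec x ->
  (exists t, stable a x t) -> stable a x (N * N).
Proof.
move=> ha hx [t ht].
case: (Rle_lt_or_eq_dec _ _ (cmax_ge0 n a)) => [hl|/esym]; last exact: stable_cmax0.
have := stableD (N * N + 0 + t * N - t) ha ht; rewrite subnKC; last by nia.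
move=> hT c; have := hT c.
have -> : ((N * N + 0 + t * N).+1 = N * N + 1 + t * N)%N by lia.
rewrite !iter_cvec_periodic_pow // addn0 addn1 => h.
apply: (Rmult_eq_reg_l (cmax a ^ (t * N))); last exact/Rgt_not_eq/pow_lt.
by rewrite h; ring.
Qed.

Lemma stable_scale a x t r : nonneg_coef a -> 0 < r ->
  stable (fun s => r * a s) x t <-> stable a x t.
Proof.
move=> ha hr; rewrite /stable !iter_cvec_scalec ?cmax_scale //; try lra.
have hp : r ^ t.+1 <> 0 by apply/Rgt_not_eq/pow_lt.
split=> h c; have := h c => /=; last by move=> ->; ring.
by move=> e; apply: (Rmult_eq_reg_l (r ^ t.+1)) => //=; rewrite e; ring.
Qed.

Lemma cmax_le a b : (forall t, (t < N)%N -> a t <= b t) -> cmax a <= cmax b.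
Proof. by move=> h; apply: bigRmax_le => t; apply: h. Qed.

Lemma le_iter_cmax1 b y j c : nonneg_coef b -> cmax b = 1 -> y c <= iter (j * N) (cvec b) y c.
Proof.
move=> hb h1; elim: j c => [|j IH] c; first exact: Rle_refl.
rewrite mulSn iterD; apply: Rle_trans (IH c) _.
by have := cmax_pow_le_iter (iter (j * N) (cvec b) y) c hb; rewrite h1 pow1 Rmult_1_l.
Qed.

Lemma iter_cmax1_periodic b y k : nonneg_coef b -> cmax b = 1 -> nonneg_vec y ->
  iter (N * N + k * N) (cvec b) y = iter (N * N) (cvec b) y.
Proof.
move=> hb h1 hy; have := iter_cvec_periodic_pow 0 k hb hy; rewrite !addn0 h1 => ->.
by apply: functional_extensionality => c; rewrite pow1 Rmult_1_l.
Qed.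

(* With lambda normalized to 1, v := b'^(N^2) x is a fixed point of b', x <= v, and
   b^(N^2) v = b^(N^2) x; the orbit of v under b increases and is N-periodic after N^2
   steps, hence constant from then on. *)
Lemma stable_of_le_coef b b' x : nonneg_coef b' -> (forall t, (t < N)%N -> b' t <= b t <= 1) ->
  cmax b' = 1 -> nonneg_vec x -> (exists t, stable b' x t) -> stable b x (N * N).
Proof.
move=> hb' hle h1' hx hst.
have hb : nonneg_coef b by move=> t ht; have := hb' t ht; have := hle t ht; lra.
have h1 : cmax b = 1.
  apply: Rle_antisym; first by apply: cmax_lub => [|t /hle]; lra.
  by rewrite -h1'; apply: cmax_le => t /hle [].
set M := (N * N)%N; set v := iter M (cvec b') x.
have hv : nonneg_vec v by move=> c; apply: iter_cvec_ge0.
have v_fix : cvec b' v = v.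
  apply: functional_extensionality => c.
  by have := stable_sq hb' hx hst c; rewrite h1' Rmult_1_l.
have x_le_v : forall c, x c <= v c by move=> c; apply: le_iter_cmax1.
have ev : iter M (cvec b) v = iter M (cvec b) x.
  apply: functional_extensionality => c; apply: Rle_antisym; last exact: iter_cvec_le_vec.
  have v_le : forall c, v c <= iter M (cvec b) x c.
    by move=> d; apply: iter_cvec_le_coef => // t /hle [].
  apply: Rle_trans (iter_cvec_le_vec M hb v_le c) _.
  by rewrite -iterD iter_cmax1_periodic //; apply: Rle_refl.
have incr : forall k c, iter k (cvec b) v c <= iter k.+1 (cvec b) v c.
  elim=> [|k IH] c /=; last exact: cvec_le_vec.
  by rewrite -{1}v_fix; apply: cvec_le_coef => // t /hle [].
have incrD : forall k d c, iter k (cvec b) v c <= iter (k + d) (cvec b) v c.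
  move=> k; elim=> [|d IH] c; first by rewrite addn0; apply: Rle_refl.
  by rewrite addnS; apply: Rle_trans (IH c) (incr _ c).
move=> c; rewrite h1 Rmult_1_l.
change (cvec b (iter M (cvec b) x) c = iter M (cvec b) x c).
rewrite -ev; apply: Rle_antisym; last exact: incr.
have := incrD M.+1 n c; rewrite addSn -addnS.
have -> : (M + n.+1 = M + 1 * N)%N by rewrite mul1n.
by rewrite iter_cmax1_periodic.
Qed.

Lemma stable_of_dominated a a' x : nonneg_coef a -> nonneg_coef a' -> 0 < cmax a -> 0 < cmax a' ->
  (forall t, (t < N)%N -> a' t * cmax a <= a t * cmax a') -> nonneg_vec x ->
  (exists t, stable a' x t) -> stable a x (N * N).
Proof.
move=> ha ha' hl hl' hdom hx [t ht].
apply/(stable_scale _ _ ha (Rinv_0_lt_compat _ hl)).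
apply: (@stable_of_le_coef _ (fun s => / cmax a' * a' s)) => //.
- by move=> s hs; apply: Rmult_le_pos; [apply/Rlt_le/Rinv_0_lt_compat | apply: ha'].
- move=> s hs; split; first exact: Rinv_mul_le_cross hl' hl (hdom s hs).
  rewrite -(Rinv_l (cmax a)); last lra.
  by apply: Rmult_le_compat_l; [apply/Rlt_le/Rinv_0_lt_compat | apply: cmax_ub].
- by rewrite cmax_scale ?Rinv_l //; [lra | apply/Rlt_le/Rinv_0_lt_compat].
- by exists t; apply/stable_scale => //; apply: Rinv_0_lt_compat.
Qed.

Lemma Attr_circ a x : nonneg_coef a -> nonneg_vec x ->
  Attr (circ a) x <-> exists t, stable a x t.
Proof.
move=> ha hx; rewrite /Attr mlambda_circ //.
by split=> [] [t ht]; exists t => c; move: (ht c); rewrite !mxvec_mxpow //; apply: circ_ge0.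
Qed.

Lemma stable_iff_mxpow a x : nonneg_coef a -> nonneg_vec x ->
  (forall r, mlambda (circ a : mat N) * mxvec (mxpow (circ a) (N ^ 2)%N) x r
             = mxvec (mxpow (circ a) (N ^ 2).+1) x r) <-> stable a x (N * N).
Proof.
move=> ha hx; have hA := circ_ge0 ha.
by rewrite mlambda_circ // !mxvec_mxpow // -mulnn; split=> h r; rewrite h.
Qed.
End Stability.

Lemma Rabs_eq0_of_le_eps D C : (forall e, 0 < e <= 1 -> Rabs D <= C * e) -> D = 0.
Proof.
move=> h; case: (Req_dec D 0) => // /Rabs_pos_lt hD.
have hC : 0 < Rabs C + 1 by have := Rabs_pos C; lra.
set m := Rmin 1 (Rabs D / (Rabs C + 1)).
have hm : 0 < m by apply: Rmin_pos; [lra | apply: Rdiv_lt_0_compat].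
have hmD : m <= Rabs D / (Rabs C + 1) by apply: Rmin_r.
have hCm : C * m <= Rabs C * (Rabs D / (Rabs C + 1)).
  apply: Rle_trans (Rmult_le_compat_r _ _ _ (Rlt_le _ _ hm) (Rle_abs C)) _.
  exact/Rmult_le_compat_l/hmD/Rabs_pos.
have eCD : Rabs C * (Rabs D / (Rabs C + 1)) = Rabs D - Rabs D / (Rabs C + 1) by field; lra.
have := h m (conj hm (Rmin_l _ _)); have : 0 < Rabs D / (Rabs C + 1) by apply: Rdiv_lt_0_compat.
rewrite eCD in hCm; lra.
Qed.

Section Continuity.
Variable n : nat.
Local Notation N := n.+1.
Local Notation cmax := (cmax n).
Local Notation nonneg_coef := (nonneg_coef n).
Implicit Types (a b : nat -> R) (x y : vec N).

Definition close a (a' : nat -> R) e := forall t, (t < N)%N -> Rabs (a t - a' t) <= e.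
Definition bounded_coef a B := forall t, (t < N)%N -> 0 <= a t <= B.
Definition bounded_vec y Y := forall c, 0 <= y c <= Y.

Lemma cvec_le_close a (a' : nat -> R) y (y' : vec N) B Y d e c :
  bounded_coef a B -> bounded_vec y' Y -> close a a' e -> (forall k, Rabs (y k - y' k) <= d) ->
  cvec a y c <= cvec a' y' c + (B * d + e * Y).
Proof.
move=> ha hy' hc hd.
have hB : 0 <= B by have := ha 0%N isT; lra.
have hd0 : 0 <= d by apply: Rle_trans (Rabs_pos _) (hd ord0).
have he : 0 <= e by apply: Rle_trans (Rabs_pos _) (hc 0%N isT).
have hY : 0 <= Y by have := hy' ord0; lra.
apply: bigRmax_lub => [|k].
  apply: Rplus_le_le_0_compat; first exact: cvec_ge0.
  by apply: Rplus_le_le_0_compat; apply: Rmult_le_pos.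
have hub := bigRmax_ub (fun k0 => circ a' c k0 * y' k0) k.
rewrite /circ in hub *; set t := ((k + N - c) %% N)%N in hub *.
have ht : (t < N)%N by apply: ltn_pmod.
have [ha0 haB] := ha t ht; have [hy0 hyY] := hy' k.
have [_ hd2] := Rabs_le_inv (hd k); have [_ hc2] := Rabs_le_inv (hc t ht).
have e1 : a t * y k = a' t * y' k + (a t * (y k - y' k) + (a t - a' t) * y' k) by ring.
rewrite e1; apply: Rplus_le_compat; first exact: hub.
apply: Rplus_le_compat.
  by apply: Rle_trans (Rmult_le_compat_l _ _ _ ha0 hd2) _; apply: Rmult_le_compat_r.
by apply: Rle_trans (Rmult_le_compat_r _ _ _ hy0 hc2) _; apply: Rmult_le_compat_l.
Qed.

Lemma cvec_dist_le a (a' : nat -> R) y (y' : vec N) B Y d e c :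
  bounded_coef a B -> bounded_coef a' B -> close a a' e ->
  bounded_vec y Y -> bounded_vec y' Y -> (forall k, Rabs (y k - y' k) <= d) ->
  Rabs (cvec a y c - cvec a' y' c) <= B * d + e * Y.
Proof.
move=> ha ha' hc hy hy' hd; apply: Rabs_le.
have := cvec_le_close c ha hy' hc hd.
have : cvec a' y' c <= cvec a y c + (B * d + e * Y).
  by apply: cvec_le_close => // [t ht|k]; rewrite Rabs_minus_sym; [apply: hc | apply: hd].
lra.
Qed.

Lemma iter_cvec_bounded a x B X k : bounded_coef a B -> bounded_vec x X ->
  bounded_vec (iter k (cvec a) x) (B ^ k * X).
Proof.
move=> ha hx; have hB : 0 <= B by have := ha 0%N isT; lra.
have hX : 0 <= X by have := hx ord0; lra.
elim: k => [|k IH] c /=; first by rewrite Rmult_1_l.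
split; first exact: cvec_ge0.
apply: bigRmax_lub => [|j].
  by apply: Rmult_le_pos => //; apply: Rmult_le_pos => //; apply: pow_le.
have [hj0 hjX] := IH j; have [ht0 htB] := ha _ (ltn_pmod (j + N - c) (ltn0Sn n)).
by rewrite Rmult_assoc; apply: Rmult_le_compat.
Qed.

Lemma iter_cvec_lipschitz (a' : nat -> R) x B X k : bounded_coef a' B -> bounded_vec x X ->
  exists K, forall a e, bounded_coef a B -> close a a' e ->
    forall c, Rabs (iter k (cvec a) x c - iter k (cvec a') x c) <= K * e.
Proof.
move=> ha' hx; elim: k => [|k [K IH]].
  by exists 0 => a e _ _ c; rewrite Rminus_diag Rabs_R0 Rmult_0_l; apply: Rle_refl.
exists (B * K + B ^ k * X) => a e ha hc c /=.
have := cvec_dist_le c ha ha' hc (iter_cvec_bounded k ha hx) (iter_cvec_bounded k ha' hx)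
  (IH a e ha hc).
by rewrite Rmult_plus_distr_r Rmult_assoc (Rmult_comm (B ^ k * X)).
Qed.

Lemma cmax_dist_le a (a' : nat -> R) e : nonneg_coef a -> nonneg_coef a' -> close a a' e ->
  Rabs (cmax a - cmax a') <= e.
Proof.
move=> ha ha' hc; apply: Rabs_le.
suff le : forall b (b' : nat -> R), nonneg_coef b' -> close b b' e -> cmax b <= cmax b' + e.
  have hc' : close a' a e by move=> t ht; rewrite Rabs_minus_sym; apply: hc.
  by have := le _ _ ha' hc; have := le _ _ ha hc'; lra.
move=> b b' hb' hcb; apply: cmax_lub => [|t ht].
  by have := cmax_ge0 n b'; have := Rle_trans _ _ _ (Rabs_pos _) (hcb 0%N isT); lra.
by have := Rabs_le_inv (hcb t ht); have := cmax_ub b' ht; lra.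
Qed.

Definition defect a x t c := iter t.+1 (cvec a) x c - cmax a * iter t (cvec a) x c.

Lemma defect_lipschitz (a' : nat -> R) x t : nonneg_coef a' -> nonneg_vec x ->
  exists C, forall a e, 0 < e <= 1 -> nonneg_coef a -> close a a' e ->
    forall c, Rabs (defect a x t c - defect a' x t c) <= C * e.
Proof.
move=> ha' hx; set B := cmax a' + 1; set X := \big[Rmax/R0]_c x c.
have hx' : bounded_vec x X by move=> c; split; [apply: hx | apply: (bigRmax_ub x c)].
have hB : forall a e, e <= 1 -> nonneg_coef a -> close a a' e -> bounded_coef a B.
  move=> a e he1 ha hc s hs; split; first exact: ha.
  by have := Rabs_le_inv (hc s hs); have := cmax_ub a' hs; rewrite /B; lra.
have ha'B : bounded_coef a' B.
  by apply: (hB a' 0) => [|//|s hs]; [lra | rewrite Rminus_diag Rabs_R0; lra].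
have [K1 L1] := iter_cvec_lipschitz t.+1 ha'B hx'.
have [K0 L0] := iter_cvec_lipschitz t ha'B hx'.
exists (K1 + B * K0 + B ^ t * X) => a e [he0 he1] ha hc c.
have haB := hB a e he1 ha hc.
have t1 := L1 a e haB hc c.
have t2 : Rabs (cmax a * (iter t (cvec a) x c - iter t (cvec a') x c)) <= B * (K0 * e).
  rewrite Rabs_mult Rabs_pos_eq; last exact: cmax_ge0.
  apply: Rmult_le_compat; [apply: cmax_ge0 | apply: Rabs_pos | | exact: L0].
  by apply: cmax_lub => [|s hs]; [rewrite /B; have := cmax_ge0 n a'; lra | case: (haB s hs)].
have t3 : Rabs ((cmax a - cmax a') * iter t (cvec a') x c) <= e * (B ^ t * X).
  have [h0 h1] := iter_cvec_bounded t ha'B hx' c.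
  rewrite Rabs_mult (Rabs_pos_eq _ h0).
  by apply: Rmult_le_compat => //; [apply: Rabs_pos | apply: cmax_dist_le].
have [u1 u2] := Rabs_le_inv t1; have [v1 v2] := Rabs_le_inv t2; have [w1 w2] := Rabs_le_inv t3.
rewrite /defect; apply: Rabs_le; lra.
Qed.

Lemma stable_closed (a' : nat -> R) x t : nonneg_coef a' -> nonneg_vec x ->
  (forall e, 0 < e -> exists a, [/\ nonneg_coef a, close a a' e & stable a x t]) -> stable a' x t.
Proof.
move=> ha' hx happ; have [C hC] := defect_lipschitz t ha' hx.
move=> c; apply: Rminus_diag_uniq; apply: (@Rabs_eq0_of_le_eps _ C) => e he.
have [a [ha hc hst]] := happ e (proj1 he).
by have := hC a e he ha hc c; rewrite /defect (hst c) Rminus_diag Rminus_0_l Rabs_Ropp.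
Qed.
End Continuity.

Lemma inIC_circ n (ai : nat -> itv) (A : mat n) : inIC ai A ->
  exists a, (forall t, (t < n)%N -> in_itv (ai t) (a t)) /\ A = circ a.
Proof.
move=> [a [hai hA]]; exists a; split => //.
by do 2!apply: functional_extensionality => ?; apply: hA.
Qed.

Lemma in_itv_bounds I v : valid_itv I -> in_itv I v -> 0 <= lo I /\ lo I <= v <= hi I.
Proof. by move=> [h0 _]; rewrite /in_itv; case: (cl I); case: (cr I) => [] [h1 h2]; lra. Qed.

Lemma valid_itv_bounds I : valid_itv I -> 0 <= lo I <= hi I.
Proof. by move=> hv; have [v /(in_itv_bounds hv)] := proj2 hv; lra. Qed.

Definition itv_near_hi I e := if cr I then hi I else Rmax ((lo I + hi I) / 2) (hi I - e / 2).
Definition itv_near_lo I e := if cl I then lo I else Rmin ((lo I + hi I) / 2) (lo I + e / 2).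

Lemma itv_near_hiP I e : valid_itv I -> 0 < e ->
  in_itv I (itv_near_hi I e) /\ Rabs (itv_near_hi I e - hi I) <= e.
Proof.
move=> [h0 [v hv]] he; move: hv; rewrite /in_itv /itv_near_hi.
case: (cl I); case: (cr I) => [] [h1 h2] /=; try by rewrite Rminus_diag Rabs_R0; lra.
all: by rewrite /Rmax; case: Rle_dec => h; (split; [lra | apply: Rabs_le; lra]).
Qed.

Lemma itv_near_loP I e : valid_itv I -> 0 < e ->
  in_itv I (itv_near_lo I e) /\ Rabs (itv_near_lo I e - lo I) <= e.
Proof.
move=> [h0 [v hv]] he; move: hv; rewrite /in_itv /itv_near_lo.
case: (cl I); case: (cr I) => [] [h1 h2] /=; try by rewrite Rminus_diag Rabs_R0; lra.
all: by rewrite /Rmin; case: Rle_dec => h; (split; [lra | apply: Rabs_le; lra]).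
Qed.

Section IntervalCirculant.
Variables (n : nat) (X : 'I_n.+1 -> itv) (ai : nat -> itv).
Local Notation N := n.+1.
Local Notation cmax := (cmax n).
Local Notation nonneg_coef := (nonneg_coef n).
Hypothesis hX : forall i, valid_itv (X i).
Hypothesis ha : forall t, (t < N)%N -> valid_itv (ai t).
Implicit Types (a : nat -> R) (x : vec N) (A : mat N).

Lemma box_nonneg x : in_box X x -> nonneg_vec x.
Proof. by move=> hx c; have := in_itv_bounds (hX c) (hx c); lra. Qed.

Lemma in_ai_bounds a t : (forall s, (s < N)%N -> in_itv (ai s) (a s)) -> (t < N)%N ->
  0 <= lo (ai t) /\ lo (ai t) <= a t <= hi (ai t).
Proof. by move=> hai ht; apply: in_itv_bounds (ha ht) (hai t ht). Qed.

Definition Ak_coef i t := if t == i then hi (ai t) else lo (ai t).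

Lemma Ak_coef_ge0 i : nonneg_coef (Ak_coef i).
Proof. by move=> t ht; have := valid_itv_bounds (ha ht); rewrite /Ak_coef; case: eqP => _; lra. Qed.

Lemma Attr_of_stable_Ak x : nonneg_vec x -> (forall i, (i < N)%N -> stable (Ak_coef i) x (N * N)) ->
  forall A, inIC ai A -> Attr A x.
Proof.
move=> hx hst A /inIC_circ [a [hai ->]].
have hb := in_ai_bounds hai.
have han : nonneg_coef a by move=> t /hb; lra.
apply/Attr_circ => //; exists (N * N)%N.
case: (Rle_lt_or_eq_dec _ _ (cmax_ge0 n a)) => [hl|/esym]; last exact: stable_cmax0.
have [i hiN ei] := cmax_attained han.
have hAk : cmax (Ak_coef i) = hi (ai i).
  apply: Rle_antisym; last by have := cmax_ub (Ak_coef i) hiN; rewrite /Ak_coef eqxx.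
  apply: cmax_lub => [|t ht]; first by have := hb i hiN; lra.
  rewrite /Ak_coef; case: eqP => [->|_]; first exact: Rle_refl.
  by have := hb t ht; have := hb i hiN; have := cmax_ub a ht; lra.
apply: (@stable_of_dominated _ _ (Ak_coef i)) => //; first exact: Ak_coef_ge0.
- by rewrite hAk; have := hb i hiN; lra.
- move=> t ht; rewrite hAk -ei /Ak_coef; case: eqP => [->|_].
    by rewrite Rmult_comm; apply: Rle_refl.
  by have := hb t ht; have := hb i hiN => [[? ?] [? ?]]; apply: Rmult_le_compat; lra.
- by exists (N * N)%N; apply: hst.
Qed.

Lemma stable_Ak_of_Attr x : nonneg_vec x -> (forall A, inIC ai A -> Attr A x) ->
  forall i, (i < N)%N -> stable (Ak_coef i) x (N * N).
Proof.
move=> hx hA i hiN; apply: stable_closed => //; first exact: Ak_coef_ge0.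
move=> e he; set a := fun t => if t == i then itv_near_hi (ai t) e else itv_near_lo (ai t) e.
have hai : forall t, (t < N)%N -> in_itv (ai t) (a t) /\ Rabs (a t - Ak_coef i t) <= e.
  move=> t ht; rewrite /a /Ak_coef.
  by case: eqP => _; [apply: itv_near_hiP (ha ht) he | apply: itv_near_loP (ha ht) he].
have han : nonneg_coef a by move=> t ht; have := in_itv_bounds (ha ht) (hai t ht).1; lra.
exists a; split => // [t ht|]; first exact: (hai t ht).2.
apply: stable_sq => //; apply/Attr_circ => //; apply: hA.
by exists a; split => // t ht; apply: (hai t ht).1.
Qed.

Lemma cmax_Ahat_coef : cmax (fun t => Rmin (ulo N ai) (hi (ai t))) = ulo N ai.
Proof.
have hlo : nonneg_coef (fun t => lo (ai t)) by move=> t ht; have := valid_itv_bounds (ha ht); lra.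
change (ulo N ai) with (cmax (fun t => lo (ai t))).
apply: Rle_antisym; first by apply: cmax_lub => [|t _]; [apply: cmax_ge0 | apply: Rmin_l].
have [k hk <-] := cmax_attained hlo.
apply: Rle_trans (cmax_ub _ hk); rewrite Rmin_left; first exact: Rle_refl.
by case: (valid_itv_bounds (ha hk)).
Qed.

Lemma Attr_Ahat_of_Attr x A : nonneg_vec x -> inIC ai A -> Attr A x -> Attr (@Ahat N ai) x.
Proof.
move=> hx /inIC_circ [a [hai ->]] hAx.
have hb := in_ai_bounds hai.
have han : nonneg_coef a by move=> t /hb; lra.
set u := ulo N ai; set ah := fun t => Rmin u (hi (ai t)).
have hu0 : 0 <= u by exact: (cmax_ge0 n (fun t => lo (ai t))).
have hah : nonneg_coef ah by move=> t ht; have := hb t ht; rewrite /ah /Rmin; case: Rle_dec; lra.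
apply/Attr_circ => //; exists (N * N)%N.
case: (Rle_lt_or_eq_dec _ _ hu0) => [hu|hu]; last by apply: stable_cmax0; rewrite // cmax_Ahat_coef.
have hlu : u <= cmax a by apply: (@cmax_le n (fun t => lo (ai t))) => t /hb; lra.
apply: (@stable_of_dominated _ _ a) => //; [by rewrite cmax_Ahat_coef | lra | |].
- move=> t ht; rewrite cmax_Ahat_coef -/u /ah /Rmin.
  have [_ [_ hhi]] := hb t ht; have hat := cmax_ub a ht; have := han t ht.
  case: Rle_dec => _ hat0.
    by rewrite Rmult_comm; apply: Rmult_le_compat_l.
  by apply: Rmult_le_compat.
- exact/Attr_circ.
Qed.
End IntervalCirculant.

Local Close Scope R_scope.

Theorem mainTheorem20 (n : nat) (X : 'I_n -> itv) (ai : nat -> itv)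
  (hX : forall i, valid_itv (X i))
  (ha : forall t, t < n -> valid_itv (ai t)) :
  ((exists x, in_box X x /\ forall A : mat n, inIC ai A -> Attr A x)
   <->
   (exists x, in_box X x /\
      forall i, i < n -> mx_nonzero (@Ak n ai i) ->
        forall r : 'I_n,
          Rmult (mlambda (@Ak n ai i)) (mxvec (mxpow (@Ak n ai i) (n ^ 2)) x r)
          = mxvec (mxpow (@Ak n ai i) (n ^ 2).+1) x r))
  /\
  (inIC ai (@Ahat n ai) ->
   ((forall x, in_box X x -> exists A : mat n, inIC ai A /\ Attr A x)
    <->
    (exists A : mat n, inIC ai A /\ forall x, in_box X x -> Attr A x))).
Proof.
case: n X ai hX ha => [|n] X ai hX ha.
  have Attr0 (A : mat 0) x : Attr A x by exists 0; case.
  have box0 : in_box X (fun _ => R0) by case.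
  split; first by split=> _; exists (fun _ => R0); split.
  move=> hAhat; split=> [_|[A [hA _]] x _]; last by exists A; split=> //; apply: Attr0.
  by exists (Ahat ai); split=> // x _; apply: Attr0.
split.
  split=> [[x [hxb hA]]|[x [hxb hst]]]; exists x; split=> //; have hx := box_nonneg hX hxb.
    move=> i hin _.
    exact: (proj2 (stable_iff_mxpow (Ak_coef_ge0 ha i) hx) (stable_Ak_of_Attr ha hx hA hin)).
  apply: (Attr_of_stable_Ak ha hx) => i hin.
  case: (Rle_lt_or_eq_dec _ _ (cmax_ge0 n (Ak_coef ai i))) => [hl|/esym h0].
    apply: (proj1 (stable_iff_mxpow (Ak_coef_ge0 ha i) hx)) => r.
    by apply: hst => //; exact: circ_nonzero (Ak_coef_ge0 ha i) hl.
  by apply: stable_cmax0 => //; apply: Ak_coef_ge0.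
move=> hAhat; split=> [htol|[A [hA hAx]] x hx]; last by exists A; split=> //; apply: hAx.
exists (Ahat ai); split=> // x hx; have [A [hA hAx]] := htol x hx.
exact: (Attr_Ahat_of_Attr ha (box_nonneg hX hx) hA hAx).
Qed.
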